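(* Let $\Sigma\subseteq\mathcal L_\Diamond$ be finite and closed under subformulas and let $\mathcal I$ be a finite weak $\Sigma$-quasimodel such that for every deterministic weak $\mathcal L_\Diamond$-quasimodel $\mathcal A$ the relation $\rightharpoonup\ \subseteq|\mathcal I|\times|\mathcal A|$ is a surjective dynamic simulation. Let $P=\{w\in|\mathcal I|:\not\vdash\mathrm{Sim}(w)\}$, and for $w\in P$ let $R(w)$ be the set of $v\in P$ for which there is a finite sequence $u_0,\dots,u_n$ of elements of $P$ with $u_0=w$, $u_n=v$ and $u_i\,S_{\mathcal I}\,u_{i+1}$ for all $i<n$. Then for every $w\in P$, $$\vdash\ \bigcirc\bigwedge_{v\in R(w)}\mathrm{Sim}(v)\ \to\ \bigwedge_{v\in R(w)}\mathrm{Sim}(v).$$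
   Context: $\mathcal L_\Diamond$ is the propositional language with $\bot,\wedge,\vee,\to$ and unary modalities $\bigcirc$, $\Diamond$. ${\sf ITL}^0_\Diamond$ is axiomatized by all intuitionistic propositional tautologies, $\neg\bigcirc\bot$, $\bigcirc\varphi\wedge\bigcirc\psi\to\bigcirc(\varphi\wedge\psi)$, $\bigcirc(\varphi\vee\psi)\to\bigcirc\varphi\vee\bigcirc\psi$, $\bigcirc(\varphi\to\psi)\to(\bigcirc\varphi\to\bigcirc\psi)$, $\varphi\vee\bigcirc\Diamond\varphi\to\Diamond\varphi$, closed under modus ponens and the rules $\varphi/\bigcirc\varphi$, $(\varphi\to\psi)/(\Diamond\varphi\to\Diamond\psi)$, $(\bigcirc\varphi\to\varphi)/(\Diamond\varphi\to\varphi)$; $\vdash\varphi$ means $\varphi\in{\sf ITL}^0_\Diamond$. Types: a $\Sigma$-type is a pair $\Phi=(\Phi^-;\Phi^+)$ of subsets of $\Sigma$ with $\Phi^-\cap\Phi^+=\varnothing$, $\Phi^-\cup\Phi^+=\Sigma$, $\bot\notin\Phi^+$, $\wedge,\vee$ in $\Phi^+$ behaving classically, ($\varphi\to\psi\in\Phi^+\Rightarrow\varphi\in\Phi^-$ or $\psi\in\Phi^+$), ($\Diamond\varphi\in\Phi^-\Rightarrow\varphi\in\Phi^-$). $\Phi\preccurlyeq_T\Psi$ iff $\Phi^+\subseteq\Psi^+$; $\Phi\subseteq_T\Psi$ iff $\Phi^-\subseteq\Psi^-$, $\Phi^+\subseteq\Psi^+$. $\Phi\,S_T\,\Psi$ iff: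 $\bigcirc\varphi\in\Phi^+\Rightarrow\varphi\in\Psi^+$; $\bigcirc\varphi\in\Phi^-\Rightarrow\varphi\in\Psi^-$; ($\Diamond\varphi\in\Phi^+$, $\varphi\in\Phi^-$)$\Rightarrow\Diamond\varphi\in\Psi^+$; $\Diamond\varphi\in\Phi^-\Rightarrow\Diamond\varphi\in\Psi^-$. A $\Sigma$-labelled frame is $(W,\preccurlyeq,\ell)$, $\preccurlyeq$ a partial order, $\ell$ mapping to $\Sigma$-types, monotone w.r.t. $\preccurlyeq_T$, and if $\varphi\to\psi\in\ell^-(w)$ then some $v\succcurlyeq w$ has $\varphi\in\ell^+(v)$, $\psi\in\ell^-(v)$. A weak $\Sigma$-quasimodel adds $S\subseteq W\times W$ forward-confluent and sensible ($w\,S\,v\Rightarrow\ell(w)\,S_T\,\ell(v)$); deterministic if $S$ is a function. A simulation from a $\Sigma$-labelled $\mathcal X$ to a $\Delta$-labelled $\mathcal Y$ ($\Sigma\subseteq\Delta$) is a forward-confluent $E\subseteq|\mathcal X|\times|\mathcal Y|$ (if $x\,E\,y$, $x\preccurlyeq x'$ then some $y'\succcurlyeq y$ has $x'\,E\,y'$) with $x\,E\,y\Rightarrow\ell(x)\subseteq_T\ell(y)$; $x\rightharpoonup y$ iff some simulation relates them; $E$ is dynamic if $x\,E\,y$ and $y\,S\,y'$ imply some $x'$ with $x\,S\,x'$, $x'\,E\,y'$; surjective if every point of $\mathcal A$ is in its range. $\mathrm{Sim}(w)=\bigwedge\ell^+(w)\to\big(\bigvee\ell^-(w)\vee\bigvee_{v\succ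 w}\mathrm{Sim}(v)\big)$, defined by backwards induction on $\prec$ ($\bigwedge\varnothing=\top$, $\bigvee\varnothing=\bot$). *)

From Stdlib Require List.
From mathcomp Require Import all_boot.
Set Implicit Arguments.
Unset Strict Implicit.
Unset Printing Implicit Defensive.

Inductive form : Type :=
| Var  : nat -> form
| Bot  : form
| And  : form -> form -> form
| Or   : form -> form -> form
| Imp  : form -> form -> form
| Next : form -> form
| Dia  : form -> form.

Definition Neg (a : form) : form := Imp a Bot.
Definition Top : form := Imp Bot Bot.

Fixpoint bigAnd (l : seq form) : form :=
  match l with
  | [::] => Top
  | [:: a] => a
  | a :: l' => And a (bigAnd l')
  end.
Fixpoint bigOr (l : seq form) : form :=
  match l with
  | [::] => Bot
  | [:: a] => a
  | a :: l' => Or a (bigOr l')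
  end.

Inductive subform : form -> form -> Prop :=
| sf_refl a : subform a a
| sf_andl a b c : subform c a -> subform c (And a b)
| sf_andr a b c : subform c b -> subform c (And a b)
| sf_orl a b c : subform c a -> subform c (Or a b)
| sf_orr a b c : subform c b -> subform c (Or a b)
| sf_impl a b c : subform c a -> subform c (Imp a b)
| sf_impr a b c : subform c b -> subform c (Imp a b)
| sf_next a c : subform c a -> subform c (Next a)
| sf_dia a c : subform c a -> subform c (Dia a).

(* The logic ITL^0_Diamond.  All intuitionistic propositional           *)
(* tautologies are generated by a standard complete Hilbert           *)
(* axiomatisation of IPC (instances over the whole language L_Diamond) *)
(* together with modus ponens.                                         *)
Inductive prov : form -> Prop :=
| ax_K a b : prov (Imp a (Imp b a))
| ax_S a b c : prov (Imp (Imp a (Imp b c)) (Imp (Imp a b) (Imp a c)))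
| ax_andI a b : prov (Imp a (Imp b (And a b)))
| ax_andE1 a b : prov (Imp (And a b) a)
| ax_andE2 a b : prov (Imp (And a b) b)
| ax_orI1 a b : prov (Imp a (Or a b))
| ax_orI2 a b : prov (Imp b (Or a b))
| ax_orE a b c : prov (Imp (Imp a c) (Imp (Imp b c) (Imp (Or a b) c)))
| ax_efq a : prov (Imp Bot a)
| ax_nextBot : prov (Neg (Next Bot))
| ax_nextAnd a b : prov (Imp (And (Next a) (Next b)) (Next (And a b)))
| ax_nextOr a b : prov (Imp (Next (Or a b)) (Or (Next a) (Next b)))
| ax_nextK a b : prov (Imp (Next (Imp a b)) (Imp (Next a) (Next b)))
| ax_diaFix a : prov (Imp (Or a (Next (Dia a))) (Dia a))
| r_mp a b : prov (Imp a b) -> prov a -> prov b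
| r_nec a : prov a -> prov (Next a)
| r_diaMono a b : prov (Imp a b) -> prov (Imp (Dia a) (Dia b))
| r_diaInd a : prov (Imp (Next a) a) -> prov (Imp (Dia a) a).

Definition is_type (Sig neg pos : form -> Prop) : Prop :=
  (forall a, neg a -> Sig a) /\
  (forall a, pos a -> Sig a) /\
  (forall a, ~ (neg a /\ pos a)) /\
  (forall a, Sig a -> neg a \/ pos a) /\
  ~ pos Bot /\
  (forall a b, Sig (And a b) -> (pos (And a b) <-> pos a /\ pos b)) /\
  (forall a b, Sig (Or a b) -> (pos (Or a b) <-> pos a \/ pos b)) /\
  (forall a b, pos (Imp a b) -> neg a \/ pos b) /\
  (forall a, neg (Dia a) -> neg a).

Definition typeS (neg1 pos1 neg2 pos2 : form -> Prop) : Prop :=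
  [/\ (forall a, pos1 (Next a) -> pos2 a),
      (forall a, neg1 (Next a) -> neg2 a),
      (forall a, pos1 (Dia a) -> neg1 a -> pos2 (Dia a))
    & (forall a, neg1 (Dia a) -> neg2 (Dia a))].

(* A (possibly infinite) frame with a dynamic relation and labels.
   fneg w / fpos w are the two components of the label l(w). *)
Record lframe := LFrame {
  pt : Type;
  fle : pt -> pt -> Prop;
  fS : pt -> pt -> Prop;
  fneg : pt -> form -> Prop;
  fpos : pt -> form -> Prop }.

Definition labelled_frame (Sig : form -> Prop) (F : lframe) : Prop :=
  (forall w : pt F, fle w w) /\
  (forall u v w : pt F, fle u v -> fle v w -> fle u w) /\
  (forall u v : pt F, fle u v -> fle v u -> u = v) /\
  (forall w : pt F, is_type Sig (fneg w) (fpos w)) /\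
  (forall (w v : pt F) a, fle w v -> fpos w a -> fpos v a) /\
  (forall (w : pt F) a b, fneg w (Imp a b) ->
     exists v, [/\ fle w v, fpos v a & fneg v b]).

Definition forward_confluent (F : lframe) : Prop :=
  forall w w' v : pt F, fle w w' -> fS w v -> exists v', fle v v' /\ fS w' v'.

Definition sensible (F : lframe) : Prop :=
  forall w v : pt F, fS w v -> typeS (fneg w) (fpos w) (fneg v) (fpos v).

Definition weak_quasimodel (Sig : form -> Prop) (F : lframe) : Prop :=
  [/\ labelled_frame Sig F, forward_confluent F & sensible F].

Definition deterministic (F : lframe) : Prop :=
  forall w : pt F, exists! v, fS w v.

Definition simulation (X Y : lframe) (E : pt X -> pt Y -> Prop) : Prop :=
  (forall x y x', E x y -> fle x x' -> exists y', fle y y' /\ E x' y') /\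
  (forall x y, E x y ->
     (forall a, fneg x a -> fneg y a) /\ (forall a, fpos x a -> fpos y a)).

Definition simulates (X Y : lframe) (x : pt X) (y : pt Y) : Prop :=
  exists E, simulation E /\ E x y.

Definition dynamic (X Y : lframe) (E : pt X -> pt Y -> Prop) : Prop :=
  forall x y y', E x y -> fS y y' -> exists x', fS x x' /\ E x' y'.

Definition surjective (X Y : lframe) (E : pt X -> pt Y -> Prop) : Prop :=
  forall y, exists x, E x y.

(* finite Sigma given as a list; label of w is                          *)
(*   l^+(w) = {a in Sigma | lpos w a},  l^-(w) = {a in Sigma | ~~ lpos w a} *)
Definition inSig (Sig : seq form) : form -> Prop := fun a => List.In a Sig.

Definition sub_closed (Sig : seq form) : Prop :=
  forall a b, List.In a Sig -> subform b a -> List.In b Sig.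

Definition finframe (Sig : seq form) (T : finType) (le S : rel T)
  (lpos : T -> pred form) : lframe :=
  @LFrame T (fun x y => le x y) (fun x y => S x y)
    (fun w a => List.In a Sig /\ ~~ lpos w a)
    (fun w a => List.In a Sig /\ lpos w a).

(* Sim(w), by backwards induction on the strict order; implemented with
   fuel #|T|, which exceeds the length of every strict chain, so
   Sim_fuel #|T| w is exactly the formula Sim(w) of the paper. *)
Fixpoint Sim_fuel (Sig : seq form) (T : finType) (le : rel T)
  (lpos : T -> pred form) (k : nat) (w : T) : form :=
  match k with
  | 0 => Bot
  | k'.+1 =>
    Imp (bigAnd [seq a <- Sig | lpos w a])
        (Or (bigOr [seq a <- Sig | ~~ lpos w a])
            (bigOr [seq Sim_fuel Sig le lpos k' v
                   | v <- enum T & le w v && (v != w)]))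
  end.

Definition Sim (Sig : seq form) (T : finType) (le : rel T)
  (lpos : T -> pred form) (w : T) : form :=
  Sim_fuel Sig le lpos #|T| w.

Inductive reachP (T : Type) (P : T -> Prop) (S : T -> T -> Prop) : T -> T -> Prop :=
| rp_refl w : P w -> reachP P S w w
| rp_step w u v : P w -> S w u -> reachP P S u v -> reachP P S w v.

(* Suppose ○φ → φ were unprovable, where φ is the conjunction of the Sim(v), v ∈ R(w).
   Lindenbaum gives a prime theory G with ○φ ∈ G and φ ∉ G, so Sim(u) ∉ G for some
   u ∈ R(w). Prime theories form the canonical quasimodel, which is deterministic
   (the successor of G is {a | ○a ∈ G}). A prime theory refuting Sim(u) extends to
   one simulated by u, and a prime theory simulated by u refutes Sim(u). Since
   simulation is dynamic, some S-successor u' of u simulates into the successor of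
   that extension, so Sim(u') is refuted there and is in particular unprovable: thus
   u' ∈ R(w). But the successor of G contains φ, hence Sim(u'). *)
From HB Require Import structures.
From mathcomp Require Import all_boot.
From Stdlib Require Import Classical FunctionalExtensionality PropExtensionality ProofIrrelevance.
Set Implicit Arguments. Unset Strict Implicit. Unset Printing Implicit Defensive.

Lemma In_mem (A : eqType) (s : seq A) x : List.In x s <-> x \in s.
Proof.
elim: s => [|y s IH] //=; rewrite in_cons IH; split.
- by case=> [->|->]; rewrite ?eqxx ?orbT.
- by case/orP => [/eqP ->|]; [left|right].
Qed.

Fixpoint tree_of_form (f : form) : GenTree.tree nat :=
  match f with
  | Var n => GenTree.Leaf n
  | Bot => GenTree.Node 0 [::]
  | And a b => GenTree.Node 1 [:: tree_of_form a; tree_of_form b]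
  | Or a b => GenTree.Node 2 [:: tree_of_form a; tree_of_form b]
  | Imp a b => GenTree.Node 3 [:: tree_of_form a; tree_of_form b]
  | Next a => GenTree.Node 4 [:: tree_of_form a]
  | Dia a => GenTree.Node 5 [:: tree_of_form a]
  end.

Fixpoint form_of_tree (t : GenTree.tree nat) : form :=
  match t with
  | GenTree.Leaf n => Var n
  | GenTree.Node 1 [:: a; b] => And (form_of_tree a) (form_of_tree b)
  | GenTree.Node 2 [:: a; b] => Or (form_of_tree a) (form_of_tree b)
  | GenTree.Node 3 [:: a; b] => Imp (form_of_tree a) (form_of_tree b)
  | GenTree.Node 4 [:: a] => Next (form_of_tree a)
  | GenTree.Node 5 [:: a] => Dia (form_of_tree a)
  | _ => Bot
  end.

Lemma tree_of_formK : cancel tree_of_form form_of_tree.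
Proof. by elim=> //= [a -> b ->|a -> b ->|a -> b ->|a ->|a ->]. Qed.

HB.instance Definition _ := Countable.copy form (can_type tree_of_formK).

Inductive der (G : form -> Prop) : form -> Prop :=
| der_hyp a : G a -> der G a
| der_thm a : prov a -> der G a
| der_mp a b : der G (Imp a b) -> der G a -> der G b.

Definition extend (G : form -> Prop) a := fun x => G x \/ x = a.

Lemma prov_imp_refl a : prov (Imp a a).
Proof. exact: r_mp (r_mp (ax_S a (Imp a a) a) (ax_K a (Imp a a))) (ax_K a a). Qed.

Lemma der_deduction G a b : der (extend G a) b -> der G (Imp a b).
Proof.
elim=> [x [Gx|->]|x px|x y _ IH1 _ IH2].
- exact: der_mp (der_thm _ (ax_K x a)) (der_hyp Gx).
- exact: der_thm _ (prov_imp_refl a).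
- exact: der_mp (der_thm _ (ax_K x a)) (der_thm _ px).
- exact: der_mp (der_mp (der_thm _ (ax_S a x y)) IH1) IH2.
Qed.

Lemma der_mono (G G' : form -> Prop) b : (forall x, G x -> G' x) -> der G b -> der G' b.
Proof.
move=> sub; elim=> [x /sub|x px|x y _ IH1 _ IH2]; first exact: der_hyp.
- exact: der_thm.
- exact: der_mp IH1 IH2.
Qed.

Lemma der_prov b : der (fun _ => False) b -> prov b.
Proof. by elim=> [x []|x px|x y _ IH1 _ IH2] //; apply: r_mp IH1 IH2. Qed.

Lemma prov_imp_der a b : der (extend (fun _ => False) a) b -> prov (Imp a b).
Proof. by move=> D; apply/der_prov/der_deduction. Qed.

Lemma der_extend_hyp G a : der (extend G a) a.
Proof. by apply: der_hyp; right. Qed.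

Lemma prov_next_mono a b : prov (Imp a b) -> prov (Imp (Next a) (Next b)).
Proof. by move=> p; apply: r_mp (ax_nextK a b) (r_nec p). Qed.

Lemma prov_dia_intro a : prov (Imp a (Dia a)).
Proof.
apply: prov_imp_der; apply: der_mp (der_thm _ (ax_diaFix a)) _.
exact: der_mp (der_thm _ (ax_orI1 _ _)) (der_extend_hyp _ _).
Qed.

Lemma prov_next_dia a : prov (Imp (Next (Dia a)) (Dia a)).
Proof.
apply: prov_imp_der; apply: der_mp (der_thm _ (ax_diaFix a)) _.
exact: der_mp (der_thm _ (ax_orI2 _ _)) (der_extend_hyp _ _).
Qed.

(* a ∨ ○◇a is ○-closed, so the induction rule applies to it. *)
Lemma prov_dia_unfold a : prov (Imp (Dia a) (Or a (Next (Dia a)))).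
Proof.
set u := Or a (Next (Dia a)).
have next_u_in_next_dia : prov (Imp (Next u) (Next (Dia a))).
  apply: prov_next_mono.
  exact: r_mp (r_mp (ax_orE _ _ _) (prov_dia_intro a)) (prov_next_dia a).
have u_closed : prov (Imp (Next u) u).
  apply: prov_imp_der; apply: der_mp (der_thm _ (ax_orI2 _ _)) _.
  exact: der_mp (der_thm _ next_u_in_next_dia) (der_extend_hyp _ _).
apply: prov_imp_der; apply: der_mp (der_thm _ (r_diaInd u_closed)) _.
exact: der_mp (der_thm _ (r_diaMono (ax_orI1 a (Next (Dia a))))) (der_extend_hyp _ _).
Qed.

Definition prime_theory (G : form -> Prop) :=
  [/\ forall a, der G a -> G a, ~ G Bot & forall a b, G (Or a b) -> G a \/ G b].

Record ptheory := PTheory { ptheory_mem :> form -> Prop; ptheoryP : prime_theory ptheory_mem }.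

Lemma ptheory_ext (G H : ptheory) : (forall a, G a <-> H a) -> G = H.
Proof.
case: G H => [g pg] [h ph] /= e.
have E : g = h by apply: functional_extensionality => a; apply: propositional_extensionality.
by subst h; rewrite (proof_irrelevance _ pg ph).
Qed.

Section PrimeTheory.
Variable G : ptheory.

Lemma ptheory_der a : der G a -> G a.
Proof. by case: (ptheoryP G) => h _ _; apply: h. Qed.

Lemma ptheory_thm a : prov a -> G a.
Proof. by move=> p; apply/ptheory_der/der_thm. Qed.

Lemma ptheory_mp a b : G (Imp a b) -> G a -> G b.
Proof. by move=> h1 h2; apply: ptheory_der (der_mp (der_hyp h1) (der_hyp h2)). Qed.

Lemma ptheory_imp a b : prov (Imp a b) -> G a -> G b.
Proof. by move/ptheory_thm; apply: ptheory_mp. Qed.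

Lemma ptheory_bot : ~ G Bot.
Proof. by case: (ptheoryP G). Qed.

Lemma ptheory_and a b : G (And a b) <-> G a /\ G b.
Proof.
split=> [h|[h1 h2]]; last exact: ptheory_mp (ptheory_imp (ax_andI a b) h1) h2.
by split; [apply: ptheory_imp (ax_andE1 a b) h|apply: ptheory_imp (ax_andE2 a b) h].
Qed.

Lemma ptheory_or a b : G (Or a b) <-> G a \/ G b.
Proof.
split; first by case: (ptheoryP G) => _ _; apply.
by case=> h; [apply: ptheory_imp (ax_orI1 a b) h|apply: ptheory_imp (ax_orI2 a b) h].
Qed.

Lemma ptheory_bigAnd s : G (bigAnd s) <-> forall x, x \in s -> G x.
Proof.
elim: s => [|a [|b s] IH]; first by split=> // _; apply: ptheory_thm (prov_imp_refl Bot).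
  by split=> [h x|]; [rewrite inE => /eqP ->|apply; rewrite inE].
rewrite [bigAnd _]/= ptheory_and IH; split=> [[ha hs] x|h].
  by rewrite inE => /orP [/eqP ->|]; [|apply: hs].
by split=> [|x xs]; apply: h; rewrite inE ?eqxx ?xs ?orbT.
Qed.

Lemma ptheory_bigOr s : G (bigOr s) <-> exists2 x, x \in s & G x.
Proof.
elim: s => [|a [|b s] IH]; first by split=> [/ptheory_bot|[]].
  by split=> [h|[x]]; [exists a; rewrite ?inE|rewrite inE => /eqP ->].
rewrite [bigOr _]/= ptheory_or IH; split=> [[ha|[x xs gx]]|[x]].
- by exists a; rewrite ?inE ?eqxx.
- by exists x; rewrite // inE xs orbT.
- by rewrite inE => /orP [/eqP ->|xs gx]; [left|right; exists x].
Qed.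
End PrimeTheory.

Section Lindenbaum.
Variables (G : form -> Prop) (b : form).

Fixpoint lind_chain (n : nat) : form -> Prop :=
  match n with
  | 0 => G
  | n'.+1 => let a := odflt Bot (unpickle n') in
    fun x => lind_chain n' x \/ (x = a /\ ~ der (extend (lind_chain n') a) b)
  end.

Definition lind_limit x := exists n, lind_chain n x.

Lemma lind_chain_mono n m x : n <= m -> lind_chain n x -> lind_chain m x.
Proof.
elim: m => [|m IH]; first by rewrite leqn0 => /eqP ->.
by rewrite leq_eqVlt => /orP [/eqP -> //|lt] cx; left; apply: IH.
Qed.

Lemma lind_chain_underivable n : ~ der G b -> ~ der (lind_chain n) b.
Proof.
move=> nG; elim: n => [|n IH] //= D.
case: (classic (der (extend (lind_chain n) (odflt Bot (unpickle n))) b)) => D'.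
- by apply: IH; apply: der_mono D => x [|[]].
- by apply: D'; apply: der_mono D => x [|[->]]; [left|right].
Qed.

Lemma der_lind_limit a : der lind_limit a -> exists n, der (lind_chain n) a.
Proof.
elim=> [x [n cx]|x px|x y _ [n1 D1] _ [n2 D2]].
- by exists n; apply: der_hyp.
- by exists 0; apply: der_thm.
- exists (maxn n1 n2); apply: der_mp.
  + by apply: der_mono D1 => z; apply/lind_chain_mono/leq_maxl.
  + by apply: der_mono D2 => z; apply/lind_chain_mono/leq_maxr.
Qed.

Lemma lindenbaum : ~ der G b -> exists2 D : ptheory, (forall x, G x -> D x) & ~ D b.
Proof.
move=> nG.
have nlim : ~ der lind_limit b by case/der_lind_limit => n; apply: lind_chain_underivable.
have maximal x : ~ der (extend lind_limit x) b -> lind_limit x.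
  move=> nd; exists (pickle x).+1; right; rewrite pickleK; split=> // D; apply: nd.
  by apply: der_mono D => z [cz|->]; [left; exists (pickle x)|right].
have closed a : der lind_limit a -> lind_limit a.
  by move=> Da; apply: maximal => /der_deduction Db; apply: nlim (der_mp Db Da).
have prime : prime_theory lind_limit.
  split=> [//||x y Hxy].
  - by move/der_hyp => Dbot; apply: nlim (der_mp (der_thm _ (ax_efq b)) Dbot).
  - apply: NNPP => /not_or_and [nx ny]; apply: nlim.
    have Dx : der (extend lind_limit x) b by apply: NNPP => /maximal.
    have Dy : der (extend lind_limit y) b by apply: NNPP => /maximal.
    apply: der_mp (der_hyp Hxy).
    exact: der_mp (der_mp (der_thm _ (ax_orE x y b)) (der_deduction Dx)) (der_deduction Dy).
by exists (PTheory prime) => [x Gx|/der_hyp //]; exists 0.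
Qed.
End Lindenbaum.

Lemma prime_extension (G : form -> Prop) p q : ~ der G (Imp p q) ->
  exists2 D : ptheory, (forall a, G a -> D a) & D p /\ ~ D q.
Proof.
move=> nd; have /lindenbaum [D GD nq] : ~ der (extend G p) q by move/der_deduction.
by exists D => [a Ga|]; [apply: GD; left|split=> //; apply: GD; right].
Qed.

Lemma ptheory_extension (G : ptheory) p q : ~ G (Imp p q) ->
  exists2 D : ptheory, (forall a, G a -> D a) & D p /\ ~ D q.
Proof. by move=> nG; apply: prime_extension => /ptheory_der. Qed.

Definition next_theory (G : form -> Prop) := fun a => G (Next a).

Lemma next_prime_theory (G : ptheory) : prime_theory (next_theory G).
Proof.
split=> [a|h|a b /(ptheory_imp (ax_nextOr a b))/ptheory_or //].
- elim=> [x //|x px|x y _ IH1 _ IH2]; first exact/ptheory_thm/r_nec.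
  exact: ptheory_mp (ptheory_imp (ax_nextK x y) IH1) IH2.
- exact: ptheory_bot (ptheory_mp (ptheory_thm _ ax_nextBot) h).
Qed.

Definition next_ptheory (G : ptheory) := PTheory (next_prime_theory G).

Definition canonical_frame : lframe :=
  @LFrame ptheory (fun G H => forall a, G a -> H a)
    (fun G H => forall a, G (Next a) <-> H a)
    (fun G a => ~ G a) (fun G a => G a).

Lemma ptheory_is_type (G : ptheory) : is_type (fun _ => True) (fun a => ~ G a) G.
Proof.
split=> //; split=> //; split; first by move=> a [].
split; first by move=> a _; case: (classic (G a)); [right|left].
split; first exact: ptheory_bot.
split; first by move=> a b _; apply: ptheory_and.
split; first by move=> a b _; apply: ptheory_or.
split=> [a b h|a nd /(ptheory_imp (prov_dia_intro a)) //].
by case: (classic (G a)) => [/(ptheory_mp h)|]; [right|left].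
Qed.

Lemma canonical_labelled_frame : labelled_frame (fun _ => True) canonical_frame.
Proof.
split=> [G a //|]; split=> [G H K h1 h2 a /h1 /h2 //|].
split=> [G H h1 h2|]; first by apply: ptheory_ext => a; split; [apply: h1|apply: h2].
split; first exact: ptheory_is_type.
split=> [G H a h|G a b /= nimp]; first exact: h.
by case/ptheory_extension: nimp => D GD [Da nDb]; exists D.
Qed.

Lemma canonical_weak_quasimodel : weak_quasimodel (fun _ => True) canonical_frame.
Proof.
split; first exact: canonical_labelled_frame.
- move=> G G' H /= GG' GH; exists (next_ptheory G'); split=> //= a /GH.
  exact: GG'.
- move=> G H /= GH; split=> [a /GH //|a nGa Ha|a Gd nGa|a nGd Hd].
  + by apply/nGa/GH.
  + by apply/GH; case/ptheory_or: (ptheory_imp (prov_dia_unfold a) Gd).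
  + by apply/nGd/(ptheory_imp (prov_next_dia a))/GH.
Qed.

Lemma canonical_deterministic : deterministic canonical_frame.
Proof.
move=> G; exists (next_ptheory G); split=> //= H GH.
by apply: ptheory_ext => a; rewrite -GH.
Qed.

Lemma reachP_snoc (A : Type) (P : A -> Prop) (R : A -> A -> Prop) w u u' :
  reachP P R w u -> R u u' -> P u' -> reachP P R w u'.
Proof.
elim=> [x px|x y z px rxy _ IH] ruu pu; last exact: rp_step px rxy (IH ruu pu).
exact: rp_step px ruu (rp_refl _ pu).
Qed.

Section Simulation.
Variables (Sig : seq form) (T : finType) (le S : rel T) (lpos : T -> pred form).
Local Notation I := (finframe Sig le S lpos).

Definition pos_conj (w : T) := bigAnd [seq a <- Sig | lpos w a].
Definition neg_disj (w : T) := bigOr [seq a <- Sig | ~~ lpos w a].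
Definition strict_up (w : T) := [seq v <- enum T | le w v && (v != w)].
Definition Sim_body (k : nat) (w : T) :=
  Or (neg_disj w) (bigOr [seq Sim_fuel Sig le lpos k v | v <- strict_up w]).

Lemma Sim_fuelS k w : Sim_fuel Sig le lpos k.+1 w = Imp (pos_conj w) (Sim_body k w).
Proof. by []. Qed.

Lemma ptheory_pos_conj (D : ptheory) w :
  D (pos_conj w) <-> forall a, a \in Sig -> lpos w a -> D a.
Proof.
rewrite ptheory_bigAnd; split=> h a; first by move=> aS wa; apply: h; rewrite mem_filter wa.
by rewrite mem_filter => /andP [wa aS]; apply: h.
Qed.

Lemma ptheory_Sim_body (D : ptheory) k w : D (Sim_body k w) ->
  (exists2 a, (a \in Sig) && ~~ lpos w a & D a) \/
  (exists2 v, le w v && (v != w) & D (Sim_fuel Sig le lpos k v)).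
Proof.
case/ptheory_or => /ptheory_bigOr [x]; first by rewrite mem_filter andbC; left; exists x.
by case/mapP => v; rewrite mem_filter mem_enum andbT => wv -> Dv; right; exists v.
Qed.

Lemma simulated_refutes_Sim_fuel (E : T -> ptheory -> Prop) :
  @simulation I canonical_frame E -> forall k w D, E w D -> ~ D (Sim_fuel Sig le lpos k w).
Proof.
move=> [fconf lab]; elim=> [|k IH] w D wD; first exact: ptheory_bot.
have [labn labp] := lab _ _ wD.
rewrite Sim_fuelS => /ptheory_mp Dbody.
have Dpos : D (pos_conj w).
  by apply/ptheory_pos_conj => a aS wa; apply: labp; split=> //; apply/In_mem.
case/ptheory_Sim_body: (Dbody Dpos) => [[a /andP [/In_mem aS wa] Da]|[v /andP [wv _] Dv]].
  exact: labn (conj aS wa) Da.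
have [D' [DD' vD']] := fconf w D v wD wv.
exact: IH v D' vD' (DD' _ Dv).
Qed.

Section PartialOrder.
Hypothesis le_trans : forall u v w, le u v -> le v w -> le u w.
Hypothesis le_anti : forall u v, le u v -> le v u -> u = v.

(* Decreases along strict [le]-steps, so fuel [k >= height w] is never exhausted above [w]. *)
Definition height (w : T) := #|[pred v | le w v && (v != w)]|.

Lemma height_lt w w' : le w w' -> w' != w -> height w' < height w.
Proof.
move=> ww' w'w; apply: proper_card; apply/properP; split.
  apply/subsetP => v; rewrite !inE => /andP [w'v vw']; rewrite (le_trans ww' w'v).
  by apply: contra vw' => /eqP vw; subst v; rewrite (le_anti ww' w'v).
by exists w'; rewrite !inE ?eqxx ?andbF // ww'.
Qed.

Lemma height_lt_card w : height w < #|T|.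
Proof.
rewrite -(cardC [pred v | le w v && (v != w)]) /height -[X in X < _]addn0 ltn_add2l.
by apply/card_gt0P; exists w; rewrite !inE eqxx andbF.
Qed.

Definition refutes_Sim_body (w : T) (D : ptheory) :=
  exists2 k, height w <= k & D (pos_conj w) /\ ~ D (Sim_body k w).

Lemma refutes_Sim_body_simulation : @simulation I canonical_frame refutes_Sim_body.
Proof.
split=> [w D w' [k hk [Dpos nDbody]] ww'|w D [k hk [Dpos nDbody]]].
  case: (eqVneq w' w) => [->|w'w]; first by exists D; split=> //; exists k.
  have hlt := height_lt ww' w'w.
  have nDw' : ~ D (Sim_fuel Sig le lpos k w').
    move=> Dw'; apply: nDbody; apply/ptheory_or; right; apply/ptheory_bigOr.
    by exists (Sim_fuel Sig le lpos k w'); rewrite // map_f // mem_filter ww' w'w mem_enum.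
  case: k hk nDbody nDw' => [|k] hk nDbody; first by have := leq_trans hlt hk.
  rewrite Sim_fuelS => /ptheory_extension [D' DD' [D'pos nD'body]].
  exists D'; split=> //; exists k; first by rewrite -ltnS (leq_trans hlt hk).
  by split.
split=> [a [/In_mem aS wa] Da|a [/In_mem aS wa]].
  by apply: nDbody; apply/ptheory_or; left; apply/ptheory_bigOr; exists a; rewrite ?mem_filter ?wa.
exact: (ptheory_pos_conj D w).1 Dpos a aS wa.
Qed.

Lemma refuted_Sim_simulated w (G : ptheory) : ~ G (Sim Sig le lpos w) ->
  exists2 G' : ptheory, (forall a, G a -> G' a) & @simulates I canonical_frame w G'.
Proof.
rewrite /Sim; case: #|T| (height_lt_card w) => // k hk.
rewrite Sim_fuelS => /ptheory_extension [G' GG' [G'pos nG'body]].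
by exists G'; last by exists refutes_Sim_body; split; [apply: refutes_Sim_body_simulation|exists k].
Qed.

Hypothesis sim_dynamic : dynamic (@simulates I canonical_frame).

Lemma refuted_Sim_successor u (G : ptheory) : ~ G (Sim Sig le lpos u) ->
  exists2 u', S u u' & ~ next_theory G (Sim Sig le lpos u').
Proof.
case/refuted_Sim_simulated => G' GG' uG'.
have [u' [uu' [E [Esim u'E]]]] := @sim_dynamic u G' (next_ptheory G') uG' (fun a => iff_refl _).
by exists u' => // /GG'; apply: simulated_refutes_Sim_fuel Esim _ _ _ u'E.
Qed.
End PartialOrder.
End Simulation.

Theorem lemma7p2 (Sig : seq form) (T : finType) (le S : rel T)
    (lpos : T -> pred form) :
  sub_closed Sig ->
  weak_quasimodel (inSig Sig) (finframe Sig le S lpos) ->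
  (forall A : lframe,
     weak_quasimodel (fun _ => True) A -> deterministic A ->
     [/\ simulation (@simulates (finframe Sig le S lpos) A),
         dynamic (@simulates (finframe Sig le S lpos) A)
       & surjective (@simulates (finframe Sig le S lpos) A)]) ->
  forall w : T,
    ~ prov (Sim Sig le lpos w) ->
    forall l : seq T, uniq l ->
      (forall v, v \in l <->
         reachP (fun u => ~ prov (Sim Sig le lpos u)) (fun x y => S x y) w v) ->
      prov (Imp (Next (bigAnd [seq Sim Sig le lpos v | v <- l]))
                (bigAnd [seq Sim Sig le lpos v | v <- l])).
Proof.
move=> _ [[_ [le_trans [le_anti _]]] _ _] simI w _ l _ l_reach.
have [_ sim_dynamic _] := simI _ canonical_weak_quasimodel canonical_deterministic.
apply: NNPP => /(contra_not (@der_prov _)) /prime_extension [G _ [Gnext nGconj]].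
have [u ul nGu] : exists2 u, u \in l & ~ G (Sim Sig le lpos u).
  apply: NNPP => nex; apply/nGconj/ptheory_bigAnd => _ /mapP [v vl ->].
  by apply: NNPP => nGv; apply: nex; exists v.
have [u' uu' nGu'] := refuted_Sim_successor le_trans le_anti sim_dynamic nGu.
have u'l : u' \in l.
  apply/l_reach/(reachP_snoc (proj1 (l_reach u) ul) uu').
  by move/r_nec/(ptheory_thm G).
exact: nGu' ((ptheory_bigAnd (next_ptheory G) _).1 Gnext _ (map_f _ u'l)).
Qed.
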